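(* Let $F$ be a pseudo-Boolean formula and let $(\mathcal{C},\mathcal{D},\mathcal{O},\mathcal{S},\vec z,\vec a)$ be a configuration satisfying the standing invariants below that is weakly $F$-valid. Suppose that a PB constraint $C$ and a substitution $\omega$ satisfy: $C$ contains no variable of $\vec a$; no variable is mapped by $\omega$ to a literal over a variable of $\vec a$; and there is a cutting planes derivation $\mathcal{C}\cup\mathcal{D}\cup\{\neg C\}\cup\mathcal{S}(\vec z{\upharpoonright}_\omega,\vec z,\vec a)\vdash(\mathcal{C}\cup\mathcal{D}\cup\{C\}){\upharpoonright}_\omega\cup\mathcal{O}(\vec z{\upharpoonright}_\omega,\vec z,\vec a)$ (i.e., the transition to $(\mathcal{C},\mathcal{D}\cup\{C\},\mathcal{O},\mathcal{S},\vec z,\vec a)$ is a valid application of the redundance rule). Then $(\mathcal{C},\mathcal{D}\cup\{C\},\mathcal{O},\mathcal{S},\vec z,\vec a)$ is also weakly $F$-valid.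
   Context: A literal is $x$ or $\bar x=1-x$; a PB constraint is $\sum_i a_i\ell_i\ge A$ with negation $\neg C\doteq\sum_i a_i\bar\ell_i\ge\sum_i a_i-A+1$; formulas are sets of PB constraints; $\vdash$ is cutting planes derivability (sound). Substitutions $\omega$ map variables to $0,1$ or literals, with $\omega(\bar x)=\overline{\omega(x)}$, $\mathrm{supp}(\omega)=\{x:\omega(x)\ne x\}$, $F{\upharpoonright}_\omega$ the result of applying $\omega$ to each literal of each constraint, $\vec z{\upharpoonright}_\omega=\omega(z_1),\dots,\omega(z_n)$, $(\alpha\circ\omega)(x)=\alpha(\omega(x))$. A formula $\mathcal{S}(\vec x,\vec a)=\{C_1,\dots,C_m\}$ is a specification over $\vec a$ if there are substitutions $\omega_i$ with $\mathrm{supp}(\omega_i)\subseteq\vec a$ such that $\{C_1,\dots,C_{i-1},\neg C_i\}\vdash\{C_1{\upharpoonright}_{\omega_i},\dots,C_i{\upharpoonright}_{\omega_i}\}$ for each $i$. Given formulas $\mathcal{O}(\vec u,\vec v,\vec a)$, $\mathcal{S}(\vec u,\vec v,\vec a)$ ($\vec u,\vec v$ of length $n$) and a list $\vec z$ of $n$ variables, $\alpha\preceq\beta$ holds iff there is an assignment $\rho$ to $\vec a$ with $\mathcal{S}(\vec z{\upharpoonright}_\alpha,\vec z{\upharpoonright}_\beta,\vec a{\upharpoonright}_\rho)\wedge\mathcal{O}(\vec z{\upharpoonright}_\alpha,\vec z{\upharpoonright}_\beta,\vec a{\upharpoonright}_\rho)$ true. A configuration is a tuple $(\mathcal{C},\mathcal{D},\mathcal{O},\mathcal{S},\vec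 z,\vec a)$ of formulas $\mathcal{C}$ (core), $\mathcal{D}$ (derived), $\mathcal{O},\mathcal{S}$ and disjoint variable lists $\vec z,\vec a$, satisfying the standing invariants: (1) there are cutting planes derivations $\mathcal{S}(\vec x,\vec x,\vec a)\vdash\mathcal{O}(\vec x,\vec x,\vec a)$ and $\mathcal{S}(\vec x,\vec y,\vec a)\cup\mathcal{O}(\vec x,\vec y,\vec a)\cup\mathcal{S}(\vec y,\vec z',\vec b)\cup\mathcal{O}(\vec y,\vec z',\vec b)\cup\mathcal{S}(\vec x,\vec z',\vec c)\vdash\mathcal{O}(\vec x,\vec z',\vec c)$ for fresh variable lists; (2) $\mathcal{S}$ is a specification over $\vec a$; (3) the variables of $\vec a$ occur only in $\mathcal{O}$ and $\mathcal{S}$ and are disjoint from $\vec z$. Assignments satisfying $\mathcal{C}\cup\mathcal{D}$ are total assignments to the non-auxiliary variables (they do not assign $\vec a$). The configuration is weakly $F$-valid if (1) if $F$ is satisfiable then $\mathcal{C}$ is satisfiable, and (2) for every assignment $\alpha$ satisfying $\mathcal{C}$ there is an assignment $\alpha'$ satisfying $\mathcal{C}\cup\mathcal{D}$ with $\alpha'\preceq\alpha$. *)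

From Stdlib Require List.
From mathcomp Require Import all_boot all_order all_algebra.
Set Implicit Arguments. Unset Strict Implicit. Unset Printing Implicit Defensive.
Import Order.TTheory GRing.Theory Num.Theory.
Local Open Scope ring_scope.

Inductive lit (V : Type) := Pos of V | Neg of V.
Arguments Pos {V}. Arguments Neg {V}.

Definition litvar V (l : lit V) : V := match l with Pos x | Neg x => x end.
Definition neglit V (l : lit V) : lit V :=
  match l with Pos x => Neg x | Neg x => Pos x end.

(* sum_i a_i l_i >= deg *)
Record constr (V : Type) := Constr { terms : seq (int * lit V); deg : int }.
Arguments Constr {V}.

Definition formula (V : Type) := seq (constr V).

Definition litval V (al : V -> bool) (l : lit V) : int :=
  match l with Pos x => (al x : nat)%:Z | Neg x => (~~ al x : nat)%:Z end.
Definition lhs V (al : V -> bool) (C : constr V) : int :=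
  \sum_(t <- terms C) t.1 * litval al t.2.
Definition satc V (al : V -> bool) (C : constr V) : bool := deg C <= lhs al C.
Definition satf V (al : V -> bool) (F : formula V) : bool := all (satc al) F.

Definition negc V (C : constr V) : constr V :=
  Constr [seq (t.1, neglit t.2) | t <- terms C]
         ((\sum_(t <- terms C) t.1) - deg C + 1).

Inductive cp (V : Type) (F : formula V) : constr V -> Prop :=
| cp_axiom C : List.In C F -> cp F C
| cp_litax (l : lit V) : cp F (Constr [:: (1, l)] 0)
| cp_add C1 C2 : cp F C1 -> cp F C2 ->
    cp F (Constr (terms C1 ++ terms C2) (deg C1 + deg C2))
| cp_mul (c : int) C : 0 < c -> cp F C ->
    cp F (Constr [seq (c * t.1, t.2) | t <- terms C] (c * deg C))
| cp_div (d : int) C : 0 < d -> all (fun t => (d %| t.1)%Z) (terms C) -> cp F C ->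
    cp F (Constr [seq ((t.1 %/ d)%Z, t.2) | t <- terms C] (- ((- deg C) %/ d)%Z))
(* normalisation: rewriting into a constraint with the same affine function
   (merging terms, x + ~x = 1, dropping zero terms, moving constants) *)
| cp_norm C C' : cp F C -> (forall al : V -> bool, lhs al C' - deg C' = lhs al C - deg C) ->
    cp F C'.

Definition derives V (F G : formula V) : Prop := forall C, List.In C G -> cp F C.

Inductive blit (V : Type) := BConst of bool | BLit of lit V.
Arguments BConst {V}. Arguments BLit {V}.

Definition negblit V (b : blit V) : blit V :=
  match b with BConst c => BConst (~~ c) | BLit l => BLit (neglit l) end.
Definition pv V (x : V) : blit V := BLit (Pos x).

Definition subst_lit V W (w : V -> blit W) (l : lit V) : blit W :=
  match l with Pos x => w x | Neg x => negblit (w x) end.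

(* C|_omega : literals mapped to constants are moved into the degree *)
Definition substc V W (w : V -> blit W) (C : constr V) : constr W :=
  Constr (flatten [seq match subst_lit w t.2 with
                       | BLit l => [:: (t.1, l)] | BConst _ => [::] end
                  | t <- terms C])
         (deg C - \sum_(t <- terms C) match subst_lit w t.2 with
                                     | BConst b => t.1 * (b : nat)%:Z
                                     | BLit _ => 0 end).
Definition substf V W (w : V -> blit W) (F : formula V) : formula W :=
  map (substc w) F.

(* template variables: inl (inl i) = u_i, inl (inr i) = v_i, inr j = a_j *)
Definition tvar (n m : nat) := (('I_n + 'I_n) + 'I_m)%type.

Definition is_aux n m (t : tvar n m) : bool :=
  match t with inr _ => true | inl _ => false end.

Definition inst n m V (x y : 'I_n -> blit V) (b : 'I_m -> blit V)
  (t : tvar n m) : blit V :=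
  match t with inl (inl i) => x i | inl (inr i) => y i | inr j => b j end.

Definition templ n m V (T : formula (tvar n m)) (x y : 'I_n -> blit V)
  (b : 'I_m -> blit V) : formula V := substf (inst x y b) T.

Definition is_spec n m (S : formula (tvar n m)) : Prop :=
  forall i, (i < size S)%N ->
    exists w : tvar n m -> blit (tvar n m),
      (forall t, w t <> BLit (Pos t) -> is_aux t) /\
      derives (rcons (take i S) (negc (nth (Constr [::] 0) S i)))
              (substf w (take i.+1 S)).

(* standing invariant (1), with fresh variable lists *)
Definition inv_refl n m (O S : formula (tvar n m)) : Prop :=
  let X := fun i : 'I_n => pv (inl i : 'I_n + 'I_m) in
  let B := fun j : 'I_m => pv (inr j : 'I_n + 'I_m) in
  derives (templ S X X B) (templ O X X B).

Definition fv6 (n m : nat) := ((('I_n + 'I_n) + 'I_n) + (('I_m + 'I_m) + 'I_m))%type.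

Definition inv_trans n m (O S : formula (tvar n m)) : Prop :=
  let X  := fun i : 'I_n => pv (inl (inl (inl i)) : fv6 n m) in
  let Y  := fun i : 'I_n => pv (inl (inl (inr i)) : fv6 n m) in
  let Z' := fun i : 'I_n => pv (inl (inr i) : fv6 n m) in
  let B  := fun j : 'I_m => pv (inr (inl (inl j)) : fv6 n m) in
  let B' := fun j : 'I_m => pv (inr (inl (inr j)) : fv6 n m) in
  let Cc := fun j : 'I_m => pv (inr (inr j) : fv6 n m) in
  derives (templ S X Y B ++ templ O X Y B ++ templ S Y Z' B' ++ templ O Y Z' B'
           ++ templ S X Z' Cc)
          (templ O X Z' Cc).

Definition prec n m (O S : formula (tvar n m)) (z : 'I_n -> nat)
  (al be : nat -> bool) : Prop :=
  exists rho : 'I_m -> bool,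
    satf (fun t : tvar n m => match t with
                              | inl (inl i) => al (z i)
                              | inl (inr i) => be (z i)
                              | inr j => rho j end) (S ++ O).

Definition occurs (x : nat) (F : formula nat) : bool :=
  has (fun C => has (fun t => litvar t.2 == x) (terms C)) F.

Definition config n m (Cc Dd : formula nat) (O S : formula (tvar n m))
  (z : 'I_n -> nat) (a : 'I_m -> nat) : Prop :=
  [/\ inv_refl O S /\ inv_trans O S, is_spec S,
      injective a,
      (forall i j, z i <> a j) &
      (forall j, ~~ occurs (a j) (Cc ++ Dd))].

Definition weakly_valid n m (F Cc Dd : formula nat) (O S : formula (tvar n m))
  (z : 'I_n -> nat) : Prop :=
  ((exists al, satf al F) -> exists al, satf al Cc) /\
  (forall al, satf al Cc ->
     exists al', satf al' (Cc ++ Dd) /\ prec O S z al' al).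

Definition redundance_step n m (Cc Dd : formula nat) (O S : formula (tvar n m))
  (z : 'I_n -> nat) (a : 'I_m -> nat) (C : constr nat) (w : nat -> blit nat) : Prop :=
  let Zw := fun i => w (z i) in
  let Z  := fun i => pv (z i) in
  let A  := fun j => pv (a j) in
  derives (Cc ++ Dd ++ [:: negc C] ++ templ S Zw Z A)
          (substf w (Cc ++ Dd ++ [:: C]) ++ templ O Zw Z A).

(* If an assignment α satisfies C, weak validity gives α' ⪯ α satisfying
   C ∪ D.  If α' falsifies C, choose values ρ for the auxiliary variables
   making S(z|_{α'∘ω}, z|_{α'}, ρ) true, which is possible because S is a
   specification.  Since neither C ∪ D nor ω mentions the auxiliary variables,
   α' updated to ρ on them satisfies the premises of the redundance
   derivation; by soundness of cutting planes, α'∘ω satisfies C ∪ D ∪ {C} and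
   α'∘ω ⪯ α'.  Transitivity of ⪯, which follows from the standing invariant
   (1) (again using that S is a specification), yields α'∘ω ⪯ α. *)
From mathcomp Require Import all_boot all_order all_algebra.
From mathcomp Require Import zify ring.
Set Implicit Arguments. Unset Strict Implicit. Unset Printing Implicit Defensive.
Import Order.TTheory GRing.Theory Num.Theory.
Local Open Scope ring_scope.

Definition litb V (al : V -> bool) (l : lit V) : bool :=
  match l with Pos x => al x | Neg x => ~~ al x end.

Definition blitb V (al : V -> bool) (b : blit V) : bool :=
  match b with BConst c => c | BLit l => litb al l end.

Definition comp_assign V W (al : W -> bool) (w : V -> blit W) : V -> bool :=
  fun x => blitb al (w x).

Lemma litvalE V (al : V -> bool) l : litval al l = (litb al l : nat)%:Z.
Proof. by case: l. Qed.

Lemma litval_ge0 V (al : V -> bool) l : 0 <= litval al l.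
Proof. by case: l. Qed.

Lemma satf_cat V (al : V -> bool) F G : satf al (F ++ G) = satf al F && satf al G.
Proof. exact: all_cat. Qed.

Lemma eq_satf V (f g : V -> bool) F : f =1 g -> satf f F = satf g F.
Proof.
move=> fg; elim: F => //= C F ->; congr andb; rewrite /satc /lhs.
by congr (_ <= _); apply: eq_bigr => t _; rewrite !litvalE; case: t.2 => x /=; rewrite fg.
Qed.

Lemma eq_satf_occurs (f g : nat -> bool) F :
  (forall x, occurs x F -> f x = g x) -> satf f F = satf g F.
Proof.
elim: F => //= C F IH fg; rewrite IH => [|x Fx]; last by apply: fg; rewrite Fx orbT.
congr andb; rewrite /satc /lhs; congr (_ <= _).
have: forall x, has (fun t => litvar t.2 == x) (terms C) -> f x = g x.
  by move=> x Cx; apply: fg; rewrite Cx.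
elim: (terms C) => [|t s IHs] fgs; first by rewrite !big_nil.
rewrite !big_cons IHs => [|x sx]; last by apply: fgs; rewrite /= sx orbT.
have fgt : f (litvar t.2) = g (litvar t.2) by apply: fgs; rewrite /= eqxx.
by rewrite !litvalE; case: t.2 fgt => x /= ->.
Qed.

Lemma cp_sound V (F : formula V) C al : cp F C -> satf al F -> satc al C.
Proof.
move=> dC alF; elim: dC.
- move=> C0 inF; have [F1 [F2 defF]] := List.in_split _ _ inF.
  by move: alF; rewrite defF satf_cat /= => /and3P[].
- by move=> l; rewrite /satc /lhs /= big_seq1 mul1r litval_ge0.
- by move=> C1 C2 _ h1 _ h2; rewrite /satc /lhs /= big_cat lerD.
- move=> c C0 c_gt0 _ h; rewrite /satc /lhs /= big_map.
  under eq_bigr do rewrite -mulrA.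
  by rewrite -mulr_sumr ler_pM2l.
- move=> d C0 d_gt0 dvd_d _ h; rewrite /satc /lhs /= big_map.
  have sum_divK :
      (\sum_(t <- terms C0) (t.1 %/ d)%Z * litval al t.2) * d = lhs al C0.
    rewrite mulr_suml /lhs; elim: (terms C0) dvd_d => [|t s IH] /=.
      by rewrite !big_nil.
    by case/andP=> dt ds; rewrite !big_cons IH // mulrAC divzK.
  by rewrite lerNl lez_divRL // mulNr lerN2 sum_divK.
- by move=> C0 C' _ h eqC; rewrite /satc -subr_ge0 eqC subr_ge0.
Qed.

Lemma derives_sound V (F G : formula V) al : derives F G -> satf al F -> satf al G.
Proof.
move=> dG alF; elim: G dG => //= C G IH dG; apply/andP; split.
  by apply: cp_sound alF; apply: dG; left.
by apply: IH => C' GC'; apply: dG; right.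
Qed.

Lemma blitb_subst_lit V W (g : W -> bool) (w : V -> blit W) l :
  blitb g (subst_lit w l) = litb (comp_assign g w) l.
Proof.
by case: l => x //=; rewrite /comp_assign; case: (w x) => [c|[y|y]] //=; rewrite negbK.
Qed.

(* Literals sent to constants are moved into the degree, so the affine
   function [lhs - deg] is unchanged. *)
Lemma lhs_substc V W (g : W -> bool) (w : V -> blit W) C :
  lhs g (substc w C) - deg (substc w C) = lhs (comp_assign g w) C - deg C.
Proof.
rewrite /substc /lhs /=.
suff -> : forall s : seq (int * lit V),
  \sum_(t <- flatten [seq match subst_lit w t.2 with
                       | BLit l => [:: (t.1, l)] | BConst _ => [::] end | t <- s])
     t.1 * litval g t.2 =
  \sum_(t <- s) t.1 * litval (comp_assign g w) t.2 -
  \sum_(t <- s) match subst_lit w t.2 with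
                | BConst b => t.1 * (b : nat)%:Z | BLit _ => 0 end.
  by rewrite opprB addrA subrK.
elim=> [|t s IH]; first by rewrite !big_nil subr0.
rewrite /= big_cat !big_cons IH litvalE -blitb_subst_lit.
case: (subst_lit w t.2) => [c|l] /=; first by rewrite big_nil add0r; ring.
by rewrite big_seq1 litvalE; ring.
Qed.

Lemma satf_substf V W (g : W -> bool) (w : V -> blit W) F :
  satf g (substf w F) = satf (comp_assign g w) F.
Proof.
elim: F => //= C F ->; congr andb.
by rewrite /satc -subr_ge0 lhs_substc subr_ge0.
Qed.

Lemma satc_negc V (al : V -> bool) C : satc al (negc C) = ~~ satc al C.
Proof.
rewrite /satc /lhs /= big_map.
have -> : \sum_(t <- terms C) t.1 * litval al (neglit t.2) =
          \sum_(t <- terms C) t.1 - \sum_(t <- terms C) t.1 * litval al t.2.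
  elim: (terms C) => [|t s IH]; first by rewrite !big_nil subr0.
  rewrite !big_cons IH.
  have -> : litval al (neglit t.2) = 1 - litval al t.2.
    by case: t.2 => x /=; case: (al x).
  ring.
set A := \sum_(t <- _) t.1; set B := \sum_(t <- _) _.
rewrite -ltNge; apply/idP/idP => ?; lia.
Qed.

Definition with_aux n m (be : tvar n m -> bool) (rho : 'I_m -> bool) :
    tvar n m -> bool :=
  fun t => match t with inr j => rho j | _ => be t end.

Lemma subst_nonaux_id n m (w : tvar n m -> blit (tvar n m)) :
  (forall t, w t <> BLit (Pos t) -> is_aux t) ->
  forall t, ~~ is_aux t -> w t = BLit (Pos t).
Proof.
move=> w_aux t /negPf t_nonaux.
have not_moved : ~ (w t <> BLit (Pos t)) by move/w_aux; rewrite t_nonaux.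
case: (w t) not_moved => [c|[y|y]] not_moved; try by exfalso; apply: not_moved.
have [-> //|ne_yt] := eqVneq y t.
by exfalso; apply: not_moved => -[/eqP]; rewrite (negPf ne_yt).
Qed.

(* Values for the auxiliary variables can be chosen one constraint at a time:
   if the current choice falsifies [C_i], the derivation required of a
   specification repairs it without breaking [C_1], ..., [C_(i-1)]. *)
Lemma spec_satisfiable n m (S : formula (tvar n m)) (be : tvar n m -> bool) :
  is_spec S -> exists rho, satf (with_aux be rho) S.
Proof.
move=> specS.
suff: forall i, (i <= size S)%N -> exists rho, satf (with_aux be rho) (take i S).
  by move/(_ (size S) (leqnn _)); rewrite take_size.
elim=> [|i IH] lt_iS; first by exists (fun _ => false); rewrite take0.
have [rho prefix] := IH (ltnW lt_iS).
rewrite (take_nth (Constr [::] 0) lt_iS); set Ci := nth _ S i.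
have [sat_Ci|unsat_Ci] := boolP (satc (with_aux be rho) Ci).
  by exists rho; rewrite /satf all_rcons sat_Ci.
have [w [w_aux dS]] := specS i lt_iS.
have := derives_sound (al := with_aux be rho) dS.
rewrite satf_substf (take_nth (Constr [::] 0) lt_iS) [satf _ (rcons _ _)]all_rcons.
rewrite satc_negc unsat_Ci -/(satf _ (take i S)) prefix => /(_ isT).
set rho' := fun j => comp_assign (with_aux be rho) w (inr j).
have fixes_nonaux : comp_assign (with_aux be rho) w =1 with_aux be rho'.
  by case=> [u|j] //=; rewrite /comp_assign subst_nonaux_id.
by rewrite (eq_satf _ fixes_nonaux); exists rho'.
Qed.

Definition templ_assign n m (z : 'I_n -> nat) (al be : nat -> bool)
    (rho : 'I_m -> bool) (t : tvar n m) : bool :=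
  match t with inl (inl i) => al (z i) | inl (inr i) => be (z i) | inr j => rho j end.

Lemma satf_templ n m V (g : V -> bool) (T : formula (tvar n m)) X Y B
    (f : tvar n m -> bool) :
  (forall i, blitb g (X i) = f (inl (inl i))) ->
  (forall i, blitb g (Y i) = f (inl (inr i))) ->
  (forall j, blitb g (B j) = f (inr j)) ->
  satf g (templ T X Y B) = satf f T.
Proof.
move=> gX gY gB; rewrite satf_substf.
by apply: eq_satf => -[[i|i]|j]; rewrite /comp_assign /=.
Qed.

Lemma spec_satisfiable_templ n m (S : formula (tvar n m)) z al be :
  is_spec S -> exists rho, satf (templ_assign z al be rho) S.
Proof.
move=> /(spec_satisfiable (templ_assign z al be (fun _ => false))) [rho satS].
exists rho; move: satS.
by rewrite (@eq_satf _ _ (templ_assign z al be rho)) // => -[[i|i]|j].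
Qed.

Lemma prec_intro n m (O S : formula (tvar n m)) z al be rho :
  satf (templ_assign z al be rho) S -> satf (templ_assign z al be rho) O ->
  prec O S z al be.
Proof. by move=> alS alO; exists rho; rewrite satf_cat alS. Qed.

Lemma prec_trans n m (O S : formula (tvar n m)) z a1 a2 a3 :
  inv_trans O S -> is_spec S ->
  prec O S z a1 a2 -> prec O S z a2 a3 -> prec O S z a1 a3.
Proof.
move=> transOS specS [r1] /[!satf_cat] /andP[S12 O12].
move=> [r2] /[!satf_cat] /andP[S23 O23].
have [r3 S13] := spec_satisfiable_templ z a1 a3 specS.
apply: (prec_intro S13).
pose joint (v : fv6 n m) : bool := match v with
  | inl (inl (inl i)) => a1 (z i) | inl (inl (inr i)) => a2 (z i)
  | inl (inr i) => a3 (z i) | inr (inl (inl j)) => r1 j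
  | inr (inl (inr j)) => r2 j | inr (inr j) => r3 j end.
have := derives_sound (al := joint) transOS; rewrite !satf_cat.
rewrite 2?(satf_templ _ (f := templ_assign z a1 a2 r1)) // S12 O12.
rewrite 2?(satf_templ _ (f := templ_assign z a2 a3 r2)) // S23 O23.
by rewrite 2?(satf_templ _ (f := templ_assign z a1 a3 r3)) // S13; apply.
Qed.

Lemma update_injective (I : finType) (T : eqType) (a : I -> T)
    (rho : I -> bool) (al : T -> bool) :
  injective a ->
  exists2 g : T -> bool, forall j, g (a j) = rho j
                       & forall x, (forall j, a j <> x) -> g x = al x.
Proof.
move=> inj_a; exists (fun x => if [pick j | a j == x] is Some j then rho j else al x).
  by move=> j; case: pickP => [j' /eqP/inj_a -> // | /(_ j)]; rewrite eqxx.
by move=> x a'x; case: pickP => [j /eqP/a'x | ].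
Qed.

Lemma redundance_improves n m (Cc Dd : formula nat) (O S : formula (tvar n m))
    (z : 'I_n -> nat) (a : 'I_m -> nat) (C : constr nat) (w : nat -> blit nat)
    (al : nat -> bool) :
  config Cc Dd O S z a ->
  (forall j, ~~ occurs (a j) [:: C]) ->
  (forall x l, w x = BLit l -> forall j, litvar l <> a j) ->
  redundance_step Cc Dd O S z a C w ->
  satf al (Cc ++ Dd) -> ~~ satc al C ->
  satf (comp_assign al w) (Cc ++ Dd ++ [:: C]) /\ prec O S z (comp_assign al w) al.
Proof.
move=> [_ specS inj_a z'a a'CD] a'C a'w red alCD al_nC.
set al_w := comp_assign al w.
have [rho alS] := spec_satisfiable_templ z al_w al specS.
have [g g_a g_off] := update_injective rho al inj_a.
have g_F F : (forall j, ~~ occurs (a j) F) -> satf g F = satf al F.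
  move=> a'F; apply: eq_satf_occurs => x Fx; apply: g_off => j ajx.
  by move: (a'F j); rewrite ajx Fx.
have g_C : satc g C = satc al C by have := g_F _ a'C; rewrite /satf /= !andbT.
have g_z i : g (z i) = al (z i) by apply: g_off => j /esym; apply: z'a.
have g_w : comp_assign g w =1 al_w.
  move=> x; rewrite /al_w /comp_assign; case wx: (w x) => [c|l] //=.
  by case: l wx => y /a'w a'y /=; rewrite g_off // => j /esym; apply: a'y.
have g_templ T :
    satf g (templ T (fun i => w (z i)) (fun i => pv (z i)) (fun j => pv (a j))) =
    satf (templ_assign z al_w al rho) T.
  by apply: satf_templ => [i|i|j]; [apply: g_w | apply: g_z | apply: g_a].
have /andP[] : satf g (substf w (Cc ++ Dd ++ [:: C])) &&
    satf g (templ O (fun i => w (z i)) (fun i => pv (z i)) (fun j => pv (a j))).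
  rewrite -satf_cat; apply: derives_sound red _.
  by rewrite catA satf_cat (g_F _ a'CD) alCD /= satc_negc g_C al_nC g_templ alS.
rewrite satf_substf (eq_satf _ g_w) g_templ => CDC alO.
by split; last exact: prec_intro alS alO.
Qed.

Unset Implicit Arguments.

Theorem lemma5 (F : formula nat) (n m : nat) (Cc Dd : formula nat)
  (O S : formula (tvar n m)) (z : 'I_n -> nat) (a : 'I_m -> nat)
  (C : constr nat) (w : nat -> blit nat) :
  config Cc Dd O S z a ->
  weakly_valid F Cc Dd O S z ->
  (forall j, ~~ occurs (a j) [:: C]) ->
  (forall x l, w x = BLit l -> forall j, litvar l <> a j) ->
  redundance_step Cc Dd O S z a C w ->
  weakly_valid F Cc (Dd ++ [:: C]) O S z.
Proof.
move=> conf [satF al_ge] a'C a'w red; split=> // al alC.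
have [al' [al'CD le_al'_al]] := al_ge al alC.
have [al'C | al'_nC] := boolP (satc al' C).
  by exists al'; rewrite catA satf_cat al'CD /= al'C.
have [[_ transOS] specS _ _ _] := conf.
have [CDC le_al'w_al'] := redundance_improves conf a'C a'w red al'CD al'_nC.
exists (comp_assign al' w); split=> //.
exact: prec_trans transOS specS le_al'w_al' le_al'_al.
Qed.
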